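(* Let $\mathcal S$ be a fundamental system and $G\subset\mathrm{Homeo}_+([0,1])$ the group generated by the elements of $\mathcal S$. Then $G$ is without linked fixed points and totally rational.
   Context: A homeomorphism $f$ of $[0,1]$ is simple if $[0,1]\setminus\mathrm{Fix}(f)$ has exactly one connected component; its closure is the support $S_f$ of $f$. It is positive if $f(x)\ge x$ for all $x$. A fundamental domain of a simple $f$ is a segment $[x,f(x)]$ with $x$ in the interior of $S_f$. A fundamental system is a family $\mathcal S$ of triples $(f,S_f,I_f)$ such that each $f$ is a simple positive homeomorphism of $[0,1]$, $S_f$ is its support and $I_f\subset S_f$ is a fundamental domain of $f$, and for any two distinct triples in $\mathcal S$: either $S_f$ and $S_g$ have disjoint interiors, or $S_f\subset I_g$, or $S_g\subset I_f$. For a group $G$ of homeomorphisms of $[0,1]$, a pair of successive fixed points is a pair $\{a,b\}$, $a<b$, such that $(a,b)$ is a connected component of $[0,1]\setminus \mathrm{Fix}(g)$ for some $g\in G$; two pairs $\{a,b\},\{c,d\}$ are linked if $(a,b)\cap\{c,d\}$ or $(c,d)\cap\{a,b\}$ consists of exactly one point; $G$ is without linked fixed points if no two such pairs are linked. For such $G$ and a pair $\{a,b\}$, $G_{[a,b]}$ is the stabilizer of $[a,b]$, and the relative translation number $\tau_{a,b}:G_{[a,b]}\to\mathbb R$ is a group morphism whose kernel is the set of elements having a fixed point in $(a,b)$ and which is positive exactly at elements $g$ with $g(x)>x$ on $(a,b)$ (it exists and is unique up to a positive factor). $G$ is totally rational if for every pair $\{a,b\}$ of successive fixed points, $\tau_{a,b}(G_{[a,b]})$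 is a cyclic subgroup $\alpha\mathbb Z$ of $\mathbb R$. *)

From Stdlib Require Import Reals ZArith.
Open Scope R_scope.

(* Homeomorphisms of [0,1] are represented by functions R -> R; only their
   values on [0,1] matter. *)
Definition I01 (x : R) : Prop := 0 <= x <= 1.

Definition cont01 (f : R -> R) : Prop :=
  forall x, I01 x -> forall eps, eps > 0 ->
    exists delta, delta > 0 /\
      forall y, I01 y -> Rabs (y - x) < delta -> Rabs (f y - f x) < eps.

Definition homeo01 (f : R -> R) : Prop :=
  (forall x, I01 x -> I01 (f x)) /\ cont01 f /\
  exists g : R -> R,
    (forall x, I01 x -> I01 (g x)) /\ cont01 g /\
    (forall x, I01 x -> g (f x) = x) /\ (forall x, I01 x -> f (g x) = x).

Definition positive01 (f : R -> R) : Prop := forall x, I01 x -> x <= f x.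

(* f is simple and its support is [p,q]: [0,1] \ Fix(f) is the single
   connected component (p,q). *)
Definition simple_with_support (f : R -> R) (p q : R) : Prop :=
  0 <= p /\ p < q /\ q <= 1 /\
  forall x, I01 x -> (f x <> x <-> p < x < q).

(* A fundamental system, indexed by I: the triple number i is
   (f i, S = [p i, q i], I_f = [u i, f i (u i)]) with u i in the interior
   of the support. *)
Definition fundamental_system {I : Type} (f : I -> R -> R) (p q u : I -> R)
  : Prop :=
  (forall i, homeo01 (f i) /\ positive01 (f i) /\
             simple_with_support (f i) (p i) (q i) /\ p i < u i < q i) /\
  (forall i j,
     ((exists x, I01 x /\ f i x <> f j x) \/ u i <> u j) ->
     (forall x, ~ (p i < x < q i /\ p j < x < q j)) \/
     (forall x, p i <= x <= q i -> u j <= x <= f j (u j)) \/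
     (forall x, p j <= x <= q j -> u i <= x <= f i (u i))).

Inductive in_gen {I : Type} (f : I -> R -> R) : (R -> R) -> Prop :=
| gen_id (h : R -> R) :
    (forall x, I01 x -> h x = x) -> in_gen f h
| gen_mul (i : I) (g h : R -> R) :
    in_gen f g -> (forall x, I01 x -> h x = f i (g x)) -> in_gen f h
| gen_inv (i : I) (g h : R -> R) :
    in_gen f g -> (forall x, I01 x -> I01 (h x) /\ f i (h x) = g x) ->
    in_gen f h.

Definition succ_fixed (G : (R -> R) -> Prop) (a b : R) : Prop :=
  exists g, G g /\ 0 <= a /\ a < b /\ b <= 1 /\ g a = a /\ g b = b /\
    forall x, a < x < b -> g x <> x.

Definition exactly_one (P Q : Prop) : Prop := (P /\ ~ Q) \/ (~ P /\ Q).

Definition linked (a b c d : R) : Prop :=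
  exactly_one (a < c < b) (a < d < b) \/ exactly_one (c < a < d) (c < b < d).

Definition without_linked_fixed_points (G : (R -> R) -> Prop) : Prop :=
  forall a b c d, succ_fixed G a b -> succ_fixed G c d -> ~ linked a b c d.

Definition stab (G : (R -> R) -> Prop) (a b : R) (g : R -> R) : Prop :=
  G g /\ (forall x, a <= x <= b -> a <= g x <= b) /\
  (forall y, a <= y <= b -> exists x, a <= x <= b /\ g x = y).

Definition rel_translation (G : (R -> R) -> Prop) (a b : R)
  (tau : (R -> R) -> R) : Prop :=
  (forall g h k, stab G a b g -> stab G a b h -> stab G a b k ->
     (forall x, I01 x -> k x = g (h x)) -> tau k = tau g + tau h) /\
  (forall g, stab G a b g -> (tau g = 0 <-> exists x, a < x < b /\ g x = x)) /\
  (forall g, stab G a b g -> (0 < tau g <-> forall x, a < x < b -> x < g x)).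

Definition totally_rational (G : (R -> R) -> Prop) : Prop :=
  forall a b, succ_fixed G a b ->
    (exists tau, rel_translation G a b tau) /\
    (forall tau, rel_translation G a b tau ->
       exists alpha : R, forall y,
         (exists g, stab G a b g /\ tau g = y) <-> exists n : Z, y = alpha * IZR n).

From Stdlib Require Import Reals ZArith Lra Lia List Classical ClassicalEpsilon
  FunctionalExtensionality.
Open Scope R_scope.

(* The proof rests on
   "canonical blocks": intervals (a,b) equipped with a ruler o, i.e. an
   increasing bi-infinite sequence cutting (a,b) into steps [o k, o (k+1)].
   They are the supports S_i ruled by the orbits of u_i under f_i, and their
   images under f_l^k when they lie in a fundamental domain I_l.

   1. Canonical blocks are permuted by G, and any two of them are disjoint,
      equal up to reindexing, or one lies in a single step of the other
      (two blocks from the same generator are disjoint or equal).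
   2. Writing g in G as a word and choosing a letter m of maximal support
      around a point x moved by g, g acts on the k-th step of the ruler of
      S_m as f_m^(k+s) h f_m^(-k) with h a shorter word supported in I_m.
      By induction on the number of letters, x lies in a canonical block
      fixed by g and on whose ruler g is a nontrivial translation.  Hence
      every pair {a,b} of successive fixed points bounds a canonical block.
   3. By 1, two such pairs are never linked.  By 1 again, the stabilizer of
      a block translates its ruler by an integer shift, which is a relative
      translation number; each block has a translation t by one step, and
      any relative translation number tau satisfies tau g = shift g * tau t,
      so its image is the cyclic group generated by tau t. *)

(* Increasing bijections of [0,1]; every element of the group generated by a
   fundamental system is one, and all maps below are only used on [0,1]. *)
Definition incr_bij (h : R -> R) : Prop :=
  (forall x, I01 x -> I01 (h x)) /\
  (forall x y, I01 x -> I01 y -> x < y -> h x < h y) /\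
  (forall y, I01 y -> exists x, I01 x /\ h x = y).

Lemma ib_I01 h x : incr_bij h -> I01 x -> I01 (h x).
Proof. intros [H _] Hx; auto. Qed.

Lemma ib_lt h x y : incr_bij h -> I01 x -> I01 y -> x < y -> h x < h y.
Proof. intros [_ [H _]]; auto. Qed.

Lemma ib_le h x y : incr_bij h -> I01 x -> I01 y -> x <= y -> h x <= h y.
Proof. intros Hh Hx Hy [Hl| ->]; [left; apply ib_lt|]; auto; lra. Qed.

Lemma ib_lt_rev h x y : incr_bij h -> I01 x -> I01 y -> h x < h y -> x < y.
Proof.
  intros Hh Hx Hy H. destruct (Rlt_or_le x y) as [|Hle]; auto.
  apply (ib_le h) in Hle; auto. lra.
Qed.

Lemma ib_le_rev h x y : incr_bij h -> I01 x -> I01 y -> h x <= h y -> x <= y.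
Proof.
  intros Hh Hx Hy H. destruct (Rle_or_lt x y) as [|Hlt]; auto.
  apply (ib_lt h) in Hlt; auto. lra.
Qed.

Lemma ib_inj h x y : incr_bij h -> I01 x -> I01 y -> h x = h y -> x = y.
Proof. intros Hh Hx Hy H. apply Rle_antisym; apply (ib_le_rev h); auto; lra. Qed.

Lemma ib_id : incr_bij (fun x => x).
Proof. split; [|split]; auto. intros y Hy; exists y; auto. Qed.

Lemma ib_comp g h : incr_bij g -> incr_bij h -> incr_bij (fun x => g (h x)).
Proof.
  intros Hg Hh. split; [|split].
  - intros; apply ib_I01; auto; apply ib_I01; auto.
  - intros; apply ib_lt; auto using ib_I01; apply ib_lt; auto.
  - intros y Hy. destruct (proj2 (proj2 Hg) y Hy) as [z [Hz <-]].
    destruct (proj2 (proj2 Hh) z Hz) as [x [Hx <-]]. exists x; auto.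
Qed.

Lemma ib_ext g h : incr_bij g -> (forall x, I01 x -> h x = g x) -> incr_bij h.
Proof.
  intros [G1 [G2 G3]] E. split; [|split].
  - intros; rewrite E; auto.
  - intros; rewrite !E; auto.
  - intros y Hy; destruct (G3 y Hy) as [x [Hx Ex]]; exists x; rewrite E; auto.
Qed.

Definition inv01 (h : R -> R) (y : R) : R :=
  epsilon (inhabits 0) (fun x => I01 x /\ h x = y).

Lemma inv01_spec h y : incr_bij h -> I01 y -> I01 (inv01 h y) /\ h (inv01 h y) = y.
Proof. intros [_ [_ S]] Hy. unfold inv01. apply epsilon_spec, S; auto. Qed.

Lemma inv01_r h y : incr_bij h -> I01 y -> h (inv01 h y) = y.
Proof. intros; apply inv01_spec; auto. Qed.

Lemma inv01_I01 h y : incr_bij h -> I01 y -> I01 (inv01 h y).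
Proof. intros; apply inv01_spec; auto. Qed.

Lemma inv01_unique h x y : incr_bij h -> I01 x -> h x = y -> inv01 h y = x.
Proof.
  intros Hh Hx <-. apply (ib_inj h); auto using ib_I01, inv01_I01.
  apply inv01_r; auto using ib_I01.
Qed.

Lemma inv01_l h x : incr_bij h -> I01 x -> inv01 h (h x) = x.
Proof. intros; apply inv01_unique; auto. Qed.

Lemma ib_inv h : incr_bij h -> incr_bij (inv01 h).
Proof.
  intros Hh. split; [|split].
  - intros; apply inv01_I01; auto.
  - intros x y Hx Hy Hxy. apply (ib_lt_rev h); auto using inv01_I01.
    rewrite !inv01_r; auto.
  - intros y Hy. exists (h y). split; [apply ib_I01|apply inv01_l]; auto.
Qed.

Lemma inv01_ext h1 h2 y : incr_bij h1 -> incr_bij h2 ->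
  (forall x, I01 x -> h1 x = h2 x) -> I01 y -> inv01 h1 y = inv01 h2 y.
Proof.
  intros G1 G2 E Hy. apply inv01_unique; auto using inv01_I01.
  rewrite E; auto using inv01_I01. apply inv01_r; auto.
Qed.

Definition zpow (h : R -> R) (k : Z) : R -> R :=
  if Z.leb 0 k then Nat.iter (Z.to_nat k) h
  else Nat.iter (Z.to_nat (- k)) (inv01 h).

Lemma ib_iter h n : incr_bij h -> incr_bij (Nat.iter n h).
Proof.
  intros Hh; induction n; simpl. apply ib_id.
  apply (ib_ext (fun x => h (Nat.iter n h x))); [apply ib_comp|]; auto.
Qed.

Lemma ib_zpow h k : incr_bij h -> incr_bij (zpow h k).
Proof.
  intros Hh; unfold zpow; destruct (Z.leb 0 k); apply ib_iter; auto using ib_inv.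
Qed.

Lemma zpow_I01 h k x : incr_bij h -> I01 x -> I01 (zpow h k x).
Proof. intros; apply ib_I01; auto using ib_zpow. Qed.

Lemma zpow_1 h x : zpow h 1 x = h x.
Proof. reflexivity. Qed.

Lemma zpow_m1 h x : zpow h (-1) x = inv01 h x.
Proof. reflexivity. Qed.

Lemma zpow_succ h k x : incr_bij h -> I01 x -> zpow h (k+1) x = h (zpow h k x).
Proof.
  intros Hh Hx. unfold zpow.
  destruct (Z.leb_spec 0 k) as [Hk|Hk];
    destruct (Z.leb_spec 0 (k+1)) as [Hk'|Hk']; try lia.
  - replace (Z.to_nat (k+1)) with (S (Z.to_nat k)) by lia. reflexivity.
  - replace k with (-1)%Z by lia. symmetry; apply inv01_r; auto.
  - replace (Z.to_nat (- k)) with (S (Z.to_nat (- (k+1)))) by lia.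
    symmetry; apply inv01_r; auto. apply ib_I01; auto. apply ib_iter, ib_inv; auto.
Qed.

Lemma zpow_pred h k x : incr_bij h -> I01 x -> zpow h (k-1) x = inv01 h (zpow h k x).
Proof.
  intros Hh Hx. replace k with ((k-1)+1)%Z at 2 by lia.
  rewrite zpow_succ, inv01_l; auto using zpow_I01.
Qed.

Lemma Z_step_ind (P : Z -> Prop) : P 0%Z ->
  (forall k, P k -> P (k+1)%Z) -> (forall k, P k -> P (k-1)%Z) -> forall k, P k.
Proof.
  intros P0 PS PP k. induction k using Z.peano_ind; auto.
  - rewrite <- Z.add_1_r; auto.
  - rewrite <- Z.sub_1_r; auto.
Qed.

Lemma zpow_add h a b x : incr_bij h -> I01 x -> zpow h (a + b) x = zpow h a (zpow h b x).
Proof.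
  intros Hh. revert x. induction a as [|a IH|a IH] using Z_step_ind; intros x Hx.
  - reflexivity.
  - replace (a + 1 + b)%Z with ((a + b) + 1)%Z by lia.
    rewrite !zpow_succ, IH; auto using zpow_I01.
  - replace (a - 1 + b)%Z with ((a + b) - 1)%Z by lia.
    rewrite !zpow_pred, IH; auto using zpow_I01.
Qed.

Lemma zpow_cancel h k x : incr_bij h -> I01 x -> zpow h k (zpow h (-k) x) = x.
Proof. intros; rewrite <- zpow_add by auto. now replace (k + - k)%Z with 0%Z by lia. Qed.

Lemma zpow_cancel' h k x : incr_bij h -> I01 x -> zpow h (-k) (zpow h k x) = x.
Proof. intros; rewrite <- zpow_add by auto. now replace (- k + k)%Z with 0%Z by lia. Qed.

Lemma zpow_ext h1 h2 k x : incr_bij h1 -> incr_bij h2 ->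
  (forall x, I01 x -> h1 x = h2 x) -> I01 x -> zpow h1 k x = zpow h2 k x.
Proof.
  intros G1 G2 E. revert x. induction k as [|k IH|k IH] using Z_step_ind; intros x Hx.
  - reflexivity.
  - rewrite !zpow_succ, IH; auto using zpow_I01.
  - rewrite !zpow_pred, IH; auto using zpow_I01, inv01_ext.
Qed.

Lemma zpow_fix h k x : incr_bij h -> I01 x -> h x = x -> zpow h k x = x.
Proof.
  intros Hh Hx E. induction k as [|k IH|k IH] using Z_step_ind.
  - reflexivity.
  - rewrite zpow_succ, IH; auto.
  - rewrite zpow_pred, IH; auto. apply inv01_unique; auto.
Qed.

Lemma zseq_mono (o : Z -> R) j k :
  (forall k, o k < o (k+1)%Z) -> (j < k)%Z -> o j < o k.
Proof.
  intros Hs H. replace k with (j + Z.of_nat (Z.to_nat (k - j)))%Z by lia.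
  assert (Hn : (0 < Z.to_nat (k - j))%nat) by lia. revert Hn.
  generalize (Z.to_nat (k - j)) as n. induction n as [|[|n] IH]; intros Hn.
  - lia.
  - apply Hs.
  - eapply Rlt_trans; [apply IH; lia|].
    replace (j + Z.of_nat (S (S n)))%Z with (j + Z.of_nat (S n) + 1)%Z by lia. apply Hs.
Qed.

Lemma zseq_le (o : Z -> R) j k :
  (forall k, o k < o (k+1)%Z) -> (j <= k)%Z -> o j <= o k.
Proof. intros S H. destruct (Z.eq_dec j k) as [->|]; [lra|left; apply zseq_mono; auto; lia]. Qed.

Lemma zseq_inj (o : Z -> R) j k : (forall k, o k < o (k+1)%Z) -> o j = o k -> j = k.
Proof.
  intros S E. destruct (Z.lt_trichotomy j k) as [H|[H|H]]; auto;
    pose proof (zseq_mono o _ _ S H); lra.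
Qed.

Lemma zseq_bracket (o : Z -> R) x : (forall k, o k < o (k+1)%Z) ->
  (exists k, o k <= x) -> (exists k, x < o k) -> exists k, o k <= x < o (k+1)%Z.
Proof.
  intros Hs [k0 H0] [k1 H1].
  assert (Hlt : (k0 < k1)%Z).
  { destruct (Z.lt_ge_cases k0 k1) as [|Hge]; auto. pose proof (zseq_le o _ _ Hs Hge). lra. }
  replace k1 with (k0 + Z.of_nat (Z.to_nat (k1 - k0)))%Z in H1 by lia. clear Hlt.
  remember (Z.to_nat (k1 - k0)) as n eqn:En. clear En. revert k0 H0 H1.
  induction n as [|n IH]; intros k0 H0 H1.
  - replace (k0 + Z.of_nat 0)%Z with k0 in H1 by lia. lra.
  - destruct (Rlt_or_le x (o (k0 + 1)%Z)); [exists k0; lra|].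
    apply (IH (k0+1)%Z); auto. now replace (k0 + 1 + Z.of_nat n)%Z with (k0 + Z.of_nat (S n))%Z by lia.
Qed.

(* Continuity on [0,1], extended to R by clamping, to use the IVT. *)
Definition clamp (x : R) : R := Rmax 0 (Rmin 1 x).

Lemma clamp_I01 x : I01 (clamp x).
Proof. unfold clamp, I01, Rmax, Rmin. repeat destruct Rle_dec; lra. Qed.

Lemma clamp_id x : I01 x -> clamp x = x.
Proof. unfold clamp, I01, Rmax, Rmin. intros. repeat destruct Rle_dec; lra. Qed.

Lemma clamp_lip x y : Rabs (clamp x - clamp y) <= Rabs (x - y).
Proof.
  unfold clamp, Rmax, Rmin. repeat destruct Rle_dec; unfold Rabs; repeat destruct Rcase_abs; lra.
Qed.

Lemma cont01_clamp h : cont01 h -> continuity (fun x => h (clamp x)).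
Proof.
  intros C x0 eps Heps. destruct (C (clamp x0) (clamp_I01 x0) eps Heps) as [d [Hd Hc]].
  exists d; split; auto. intros x [_ Hx]. simpl in *. unfold R_dist in *.
  apply Hc; [apply clamp_I01|]. eapply Rle_lt_trans; [apply clamp_lip|auto].
Qed.

Lemma cont_inj_increasing h : cont01 h -> (forall x, I01 x -> I01 (h x)) ->
  (forall x y, I01 x -> I01 y -> h x = h y -> x = y) -> h 1 = 1 ->
  forall x y, I01 x -> I01 y -> x < y -> h x < h y.
Proof.
  intros C Hi Hinj H1 x y Hx Hy Hxy.
  destruct (Rtotal_order (h x) (h y)) as [|[Heq|Hgt]]; auto; exfalso.
  { apply Hinj in Heq; auto. lra. }
  assert (I1 : I01 1) by (unfold I01; lra).
  assert (Hy1 : y < 1).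
  { destruct (Req_dec y 1) as [->|]; [|unfold I01 in Hy; lra].
    specialize (Hi x Hx). unfold I01 in Hi; lra. }
  assert (Hx1 : h x < 1).
  { specialize (Hi x Hx). destruct (Req_dec (h x) 1) as [E|]; [|unfold I01 in Hi; lra].
    rewrite <- H1 in E. apply Hinj in E; auto. lra. }
  assert (Cc : continuity (fun z => h (clamp z) - h x)).
  { apply continuity_minus; [apply cont01_clamp; auto|apply continuity_const; intros ? ?; auto]. }
  destruct (IVT _ y 1 Cc Hy1) as [z [Hz Ez]]; simpl.
  - rewrite clamp_id; auto. lra.
  - rewrite clamp_id, H1; auto. lra.
  - assert (Iz : I01 z) by (unfold I01 in *; lra). rewrite clamp_id in Ez; auto.
    assert (z = x) by (apply Hinj; auto; lra). lra.
Qed.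

Definition pos_simple (h : R -> R) (p q : R) : Prop :=
  homeo01 h /\ positive01 h /\ simple_with_support h p q.

Section PositiveSimple.
Variables (h : R -> R) (p q : R).
Hypothesis Hh : pos_simple h p q.

Lemma ps_pq : 0 <= p /\ p < q /\ q <= 1.
Proof. destruct Hh as [_ [_ [A [B [C _]]]]]; auto. Qed.

Lemma ps_support_I01 x : p <= x <= q -> I01 x.
Proof. pose proof ps_pq. unfold I01; lra. Qed.

Lemma ps_incr_bij : incr_bij h.
Proof.
  destruct Hh as [[Hi [C [g [Hg [_ [Egf Efg]]]]]] [Hpos _]].
  assert (Hinj : forall x y, I01 x -> I01 y -> h x = h y -> x = y).
  { intros x y Hx Hy E. now rewrite <- (Egf x Hx), <- (Egf y Hy), E. }
  assert (H1 : h 1 = 1).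
  { assert (I1 : I01 1) by (unfold I01; lra).
    specialize (Hi 1 I1); specialize (Hpos 1 I1). unfold I01 in *; lra. }
  split; [auto|split; [apply cont_inj_increasing; auto|]].
  intros y Hy. exists (g y). auto.
Qed.

Lemma ps_fix x : I01 x -> ~ (p < x < q) -> h x = x.
Proof.
  destruct Hh as [_ [_ [_ [_ [_ S]]]]]. intros Hx Hn.
  destruct (Req_dec (h x) x); auto. exfalso; apply Hn, S; auto.
Qed.

Lemma ps_moves x : p < x < q -> x < h x.
Proof.
  destruct Hh as [_ [Hp [_ [_ [_ S]]]]]. intros Hx.
  assert (Ix : I01 x) by (apply ps_support_I01; lra).
  destruct (Hp x Ix) as [|E]; auto. exfalso. apply (S x Ix); auto.
Qed.

Lemma ps_inv01_in y : p < y < q -> p < inv01 h y < q.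
Proof.
  intros Hy. assert (Iy : I01 y) by (apply ps_support_I01; lra).
  pose proof ps_incr_bij as G.
  destruct (classic (p < inv01 h y < q)) as [|Hn]; auto. exfalso.
  pose proof (ps_fix _ (inv01_I01 h y G Iy) Hn) as E.
  rewrite inv01_r in E; auto. rewrite <- E in Hn. auto.
Qed.

Lemma ps_in x : p < x < q -> p < h x < q.
Proof.
  intros Hx. assert (Ix : I01 x) by (apply ps_support_I01; lra).
  destruct (classic (p < h x < q)) as [|Hn]; auto. exfalso.
  pose proof (ps_fix _ (ib_I01 _ _ ps_incr_bij Ix) Hn) as E.
  apply (ib_inj h) in E; auto using ps_incr_bij, ib_I01. pose proof (ps_moves x Hx). lra.
Qed.

Lemma ps_zpow_in k x : p < x < q -> p < zpow h k x < q.
Proof.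
  pose proof ps_incr_bij as G. intros Hx.
  induction k as [|k IH|k IH] using Z_step_ind; auto;
    assert (I01 (zpow h k x)) by (apply ps_support_I01; lra).
  - rewrite zpow_succ; auto using ps_in. apply ps_support_I01; lra.
  - rewrite zpow_pred; auto using ps_inv01_in. apply ps_support_I01; lra.
Qed.

Lemma ps_zpow_fix k x : I01 x -> ~ (p < x < q) -> zpow h k x = x.
Proof. intros; apply zpow_fix; auto using ps_incr_bij, ps_fix. Qed.

Lemma ps_zpow_support k x : p <= x <= q -> p <= zpow h k x <= q.
Proof.
  intros Hx. destruct (classic (p < x < q)) as [Hin|Hout].
  - pose proof (ps_zpow_in k x Hin). lra.
  - rewrite ps_zpow_fix; auto using ps_support_I01.
Qed.

Variable u : R.
Hypothesis Hu : p < u < q.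

Lemma ps_orbit_step k : zpow h k u < zpow h (k+1) u.
Proof.
  pose proof (ps_zpow_in k u Hu). rewrite zpow_succ; auto using ps_incr_bij, ps_moves.
  apply ps_support_I01; lra.
Qed.

Lemma ps_orbit_up x : x < q -> exists k, x < zpow h k u.
Proof.
  intros Hx. apply NNPP; intros Hn.
  assert (B : forall k, zpow h k u <= x).
  { intros k; destruct (Rle_or_lt (zpow h k u) x); auto. exfalso; eauto. }
  destruct (completeness (fun y => exists k, y = zpow h k u)) as [L [HL1 HL2]].
  { exists x. intros y [k ->]. apply B. }
  { exists u. exists 0%Z. reflexivity. }
  pose proof ps_incr_bij as G.
  assert (HuL : u <= L) by (apply HL1; exists 0%Z; reflexivity).
  assert (HLx : L <= x) by (apply HL2; intros y [k ->]; apply B).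
  assert (HLi : p < L < q) by lra.
  assert (IL : I01 L) by (apply ps_support_I01; lra).
  (* h^{-1} L < L, so some orbit point exceeds h^{-1} L; its image exceeds L *)
  assert (HhL : inv01 h L < L).
  { pose proof (ps_moves _ (ps_inv01_in L HLi)). rewrite inv01_r in *; auto. }
  destruct (classic (exists k, inv01 h L < zpow h k u)) as [[k Hk]|Hno].
  - assert (Hk1 : zpow h (k+1) u <= L) by (apply HL1; eauto).
    pose proof (ps_zpow_in k u Hu).
    rewrite zpow_succ in Hk1 by (auto; apply ps_support_I01; lra).
    apply (ib_lt h) in Hk; auto using inv01_I01; [|apply ps_support_I01; lra].
    rewrite inv01_r in Hk; auto. lra.
  - assert (L <= inv01 h L); [|lra].
    apply HL2. intros y [k ->]. apply Rnot_lt_le. eauto.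
Qed.

Lemma ps_orbit_down x : p < x -> exists k, zpow h k u < x.
Proof.
  intros Hx. apply NNPP; intros Hn.
  assert (B : forall k, x <= zpow h k u).
  { intros k; destruct (Rle_or_lt x (zpow h k u)); auto. exfalso; eauto. }
  (* - L is the infimum of the orbit, L being the supremum of its negation *)
  destruct (completeness (fun y => exists k, y = - zpow h k u)) as [L [HL1 HL2]].
  { exists (- x). intros y [k ->]. specialize (B k). lra. }
  { exists (- u). exists 0%Z. reflexivity. }
  pose proof ps_incr_bij as G.
  assert (HMu : - L <= u) by (assert (- u <= L) by (apply HL1; exists 0%Z; reflexivity); lra).
  assert (HxM : x <= - L).
  { assert (L <= - x); [|lra]. apply HL2. intros y [k ->]. specialize (B k). lra. }
  assert (HMi : p < - L < q) by lra.
  assert (IM : I01 (- L)) by (apply ps_support_I01; lra).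
  pose proof (ps_moves _ HMi) as hM.
  (* h (-L) > -L, so some orbit point lies below h (-L); its preimage lies below -L *)
  destruct (classic (exists k, zpow h k u < h (- L))) as [[k Hk]|Hno].
  - assert (Hk1 : - zpow h (k-1) u <= L) by (apply HL1; eauto).
    pose proof (ps_zpow_in (k-1) u Hu).
    replace k with ((k-1)+1)%Z in Hk by lia.
    rewrite zpow_succ in Hk by (auto; apply ps_support_I01; lra).
    apply (ib_lt_rev h) in Hk; auto. lra. apply ps_support_I01; lra.
  - assert (- h (- L) >= L); [|lra].
    apply Rle_ge, HL2. intros y [k ->]. apply Ropp_le_contravar, Rnot_lt_le. eauto.
Qed.

Lemma ps_orbit_bracket x : p < x < q -> exists k, zpow h k u <= x < zpow h (k+1) u.
Proof.
  intros Hx. apply (zseq_bracket (fun k => zpow h k u)).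
  - apply ps_orbit_step.
  - destruct (ps_orbit_down x) as [k Hk]; [lra|]. exists k; lra.
  - apply ps_orbit_up; lra.
Qed.

End PositiveSimple.

(* A block is an interval (a,b) of [0,1] together with a "ruler" o: an
   increasing bi-infinite sequence in (a,b) whose steps [o k, o (k+1)) cover
   (a,b).  The support of a simple positive homeomorphism, ruled by the orbit
   of a point, is the model case. *)
Definition block (a b : R) (o : Z -> R) : Prop :=
  0 <= a /\ a < b /\ b <= 1 /\ (forall k, a < o k < b) /\
  (forall k, o k < o (k+1)%Z) /\
  (forall x, a < x < b -> exists k, o k <= x < o (k+1)%Z).

Section BlockFacts.
Variables (a b : R) (o : Z -> R).
Hypothesis B : block a b o.

Lemma block_ab : a < b.
Proof. apply B. Qed.
Lemma block_a : I01 a.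
Proof. destruct B as [? [? [? _]]]; unfold I01; lra. Qed.
Lemma block_b : I01 b.
Proof. destruct B as [? [? [? _]]]; unfold I01; lra. Qed.
Lemma block_in k : a < o k < b.
Proof. apply B. Qed.
Lemma block_o k : I01 (o k).
Proof. pose proof block_a; pose proof block_b; pose proof (block_in k). unfold I01 in *; lra. Qed.
Lemma block_step k : o k < o (k+1)%Z.
Proof. apply B. Qed.
Lemma block_bracket x : a < x < b -> exists k, o k <= x < o (k+1)%Z.
Proof. apply B. Qed.
Lemma block_le j k : (j <= k)%Z -> o j <= o k.
Proof. apply zseq_le, block_step. Qed.

Lemma shift_moves_right g s : incr_bij g -> (forall k, g (o k) = o (k+s)%Z) ->
  (0 < s)%Z -> forall x, a < x < b -> x < g x.
Proof.
  intros Gg Hs Hp x Hx. destruct (block_bracket x Hx) as [k Hk].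
  assert (I01 x) by (pose proof block_a; pose proof block_b; unfold I01 in *; lra).
  assert (g (o k) <= g x) by (apply ib_le; auto using block_o; lra).
  rewrite Hs in *. pose proof (block_le (k+1) (k+s) ltac:(lia)). lra.
Qed.

Lemma shift_moves_left g s : incr_bij g -> (forall k, g (o k) = o (k+s)%Z) ->
  (s < 0)%Z -> forall x, a < x < b -> g x < x.
Proof.
  intros Gg Hs Hp x Hx. destruct (block_bracket x Hx) as [k Hk].
  assert (I01 x) by (pose proof block_a; pose proof block_b; unfold I01 in *; lra).
  assert (g x < g (o (k+1)%Z)) by (apply ib_lt; auto using block_o; lra).
  rewrite Hs in *. pose proof (block_le (k+1+s) k ltac:(lia)). lra.
Qed.

Lemma shift_no_fix g s : incr_bij g -> (forall k, g (o k) = o (k+s)%Z) ->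
  s <> 0%Z -> forall x, a < x < b -> g x <> x.
Proof.
  intros Gg Hs Hn x Hx. destruct (Z.lt_ge_cases s 0).
  - pose proof (shift_moves_left g s Gg Hs H x Hx); lra.
  - pose proof (shift_moves_right g s Gg Hs ltac:(lia) x Hx); lra.
Qed.

End BlockFacts.

Lemma block_transport phi a b o : incr_bij phi -> block a b o ->
  block (phi a) (phi b) (fun k => phi (o k)).
Proof.
  intros Gp B. pose proof (block_a _ _ _ B) as Ia. pose proof (block_b _ _ _ B) as Ib.
  pose proof (block_o _ _ _ B) as Io.
  pose proof (ib_I01 _ _ Gp Ia). pose proof (ib_I01 _ _ Gp Ib).
  split; [|split; [|split; [|split; [|split]]]].
  - unfold I01 in *; lra.
  - apply ib_lt; auto. apply (block_ab _ _ _ B).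
  - unfold I01 in *; lra.
  - intros k. destruct (block_in _ _ _ B k). split; apply ib_lt; auto.
  - intros k. apply ib_lt; auto. apply (block_step _ _ _ B).
  - intros x Hx. assert (Ix : I01 x) by (unfold I01 in *; lra).
    destruct (proj2 (proj2 Gp) x Ix) as [y [Iy <-]].
    assert (Hy : a < y < b) by (split; apply (ib_lt_rev phi); auto; lra).
    destruct (block_bracket _ _ _ B y Hy) as [k Hk]. exists k.
    split; [apply ib_le|apply ib_lt]; auto; lra.
Qed.

Lemma block_reindex a b o n : block a b o -> block a b (fun k => o (k + n)%Z).
Proof.
  intros [A [B [C [D [E F]]]]]. split; [|split; [|split; [|split; [|split]]]]; auto.
  - intros k. now replace (k + 1 + n)%Z with ((k + n) + 1)%Z by lia.
  - intros x Hx. destruct (F x Hx) as [k Hk]. exists (k - n)%Z.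
    now replace (k - n + n)%Z with k by lia; replace (k - n + 1 + n)%Z with (k + 1)%Z by lia.
Qed.

Definition disjoint_iv (a b c d : R) : Prop := b <= c \/ d <= a.
Definition in_step (o : Z -> R) (c d : R) : Prop := exists k, o k <= c /\ d <= o (k+1)%Z.
Definition same_block (a b : R) (o : Z -> R) (c d : R) (o' : Z -> R) : Prop :=
  a = c /\ b = d /\ exists n, forall k, o' k = o (k+n)%Z.
Definition nested_or_disjoint a b o c d o' : Prop :=
  disjoint_iv a b c d \/ in_step o c d \/ in_step o' a b \/ same_block a b o c d o'.
Definition disjoint_or_same a b o c d o' : Prop :=
  disjoint_iv a b c d \/ same_block a b o c d o'.

Lemma in_step_reindex o c d n : in_step o c d -> in_step (fun k => o (k + n)%Z) c d.
Proof.
  intros [k H]. exists (k - n)%Z.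
  now replace (k - n + n)%Z with k by lia; replace (k - n + 1 + n)%Z with (k+1)%Z by lia.
Qed.

Lemma same_block_reindex_l a b o c d o' n : same_block a b o c d o' ->
  same_block a b (fun k => o (k + n)%Z) c d o'.
Proof.
  intros [E1 [E2 [m Hm]]]. split; [|split]; auto. exists (m - n)%Z.
  intros k. rewrite Hm. f_equal; lia.
Qed.

Lemma same_block_reindex_r a b o c d o' n : same_block a b o c d o' ->
  same_block a b o c d (fun k => o' (k + n)%Z).
Proof.
  intros [E1 [E2 [m Hm]]]. split; [|split]; auto. exists (n + m)%Z.
  intros k. rewrite Hm. f_equal; lia.
Qed.

Lemma nested_or_disjoint_reindex_l a b o c d o' n : nested_or_disjoint a b o c d o' ->
  nested_or_disjoint a b (fun k => o (k + n)%Z) c d o'.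
Proof.
  intros [H|[H|[H|H]]]; unfold nested_or_disjoint;
    auto using in_step_reindex, same_block_reindex_l.
Qed.

Lemma disjoint_or_same_reindex_l a b o c d o' n : disjoint_or_same a b o c d o' ->
  disjoint_or_same a b (fun k => o (k + n)%Z) c d o'.
Proof. intros [H|H]; [left|right; apply same_block_reindex_l]; auto. Qed.

Section Transport.
Variables (phi : R -> R) (a b c d : R) (o o' : Z -> R).
Hypothesis Gp : incr_bij phi.
Hypotheses (B1 : block a b o) (B2 : block c d o').

Lemma disjoint_iv_transport : disjoint_iv a b c d ->
  disjoint_iv (phi a) (phi b) (phi c) (phi d).
Proof.
  pose proof (block_a _ _ _ B1); pose proof (block_b _ _ _ B1).
  pose proof (block_a _ _ _ B2); pose proof (block_b _ _ _ B2).
  intros [Hc|Hc]; [left|right]; apply ib_le; auto.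
Qed.

Lemma in_step_transport (r : Z -> R) x y : (forall k, I01 (r k)) -> I01 x -> I01 y ->
  in_step r x y -> in_step (fun k => phi (r k)) (phi x) (phi y).
Proof. intros Ir Ix Iy [k [H1 H2]]. exists k; split; apply ib_le; auto. Qed.

Lemma same_block_transport : same_block a b o c d o' ->
  same_block (phi a) (phi b) (fun k => phi (o k)) (phi c) (phi d) (fun k => phi (o' k)).
Proof.
  intros [E1 [E2 [n Hn]]]. split; [|split]; try congruence.
  exists n; intros k; rewrite Hn; auto.
Qed.

Lemma nested_or_disjoint_transport : nested_or_disjoint a b o c d o' ->
  nested_or_disjoint (phi a) (phi b) (fun k => phi (o k)) (phi c) (phi d) (fun k => phi (o' k)).
Proof.
  pose proof (block_o _ _ _ B1); pose proof (block_o _ _ _ B2).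
  pose proof (block_a _ _ _ B1); pose proof (block_b _ _ _ B1).
  pose proof (block_a _ _ _ B2); pose proof (block_b _ _ _ B2).
  intros [R|[R|[R|R]]]; unfold nested_or_disjoint;
    auto using disjoint_iv_transport, in_step_transport, same_block_transport.
Qed.

Lemma disjoint_or_same_transport : disjoint_or_same a b o c d o' ->
  disjoint_or_same (phi a) (phi b) (fun k => phi (o k)) (phi c) (phi d) (fun k => phi (o' k)).
Proof.
  intros [H|H]; [left; apply disjoint_iv_transport|right; apply same_block_transport]; auto.
Qed.

End Transport.

Lemma list_argmax {A : Type} (L : list A) (P : A -> Prop) (w : A -> R) :
  (exists l, In l L /\ P l) ->
  exists m, In m L /\ P m /\ forall l, In l L -> P l -> w l <= w m.
Proof.
  induction L as [|a L IH]; intros [l [Hl Pl]]; [destruct Hl|].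
  destruct (classic (exists l, In l L /\ P l)) as [Ex|NEx].
  - destruct (IH Ex) as [m [Hm [Pm Mm]]].
    destruct (classic (P a /\ w m < w a)) as [[Pa Hlt]|Nbig].
    + exists a; split; [left; auto|split; auto].
      intros l0 [<-|H0] P0; [lra|specialize (Mm l0 H0 P0); lra].
    + exists m; split; [right; auto|split; auto].
      intros l0 [<-|H0] P0; auto. apply Rnot_lt_le; intros Hlt; auto.
  - destruct Hl as [<-|Hl]; [|exfalso; eauto].
    exists a; split; [left; auto|split; auto].
    intros l0 [<-|H0] P0; [lra|exfalso; eauto].
Qed.

Lemma nested_or_disjoint_not_linked a b o c d o' : block a b o -> block c d o' ->
  nested_or_disjoint a b o c d o' -> ~ linked a b c d.
Proof.
  intros B1 B2 Rel. pose proof (block_ab _ _ _ B1); pose proof (block_ab _ _ _ B2).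
  assert (Nest : (b <= c \/ d <= a) \/ (a < c /\ d < b) \/ (c < a /\ b < d) \/
                 (a = c /\ b = d)).
  { destruct Rel as [R|[[k [R1 R2]]|[[k [R1 R2]]|[E1 [E2 _]]]]].
    - left; exact R.
    - pose proof (block_in _ _ _ B1 k); pose proof (block_in _ _ _ B1 (k+1)). right; left; lra.
    - pose proof (block_in _ _ _ B2 k); pose proof (block_in _ _ _ B2 (k+1)).
      right; right; left; lra.
    - do 3 right; auto. }
  unfold linked, exactly_one. intros [[[A N]|[N A]]|[[A N]|[N A]]];
    apply N; destruct Nest as [[?|?]|[[? ?]|[[? ?]|[? ?]]]]; lra.
Qed.

Lemma interval_ext a b c d : a < b -> c < d ->
  (forall x, a < x < b <-> c < x < d) -> a = c /\ b = d.
Proof.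
  intros Hab Hcd E.
  assert (Low : forall a b c d, a < b -> c < d ->
            (forall x, a < x < b -> c < x < d) -> c <= a).
  { clear. intros a b c d Hab Hcd E. apply Rnot_lt_le; intros Hlt.
    destruct (E ((a + Rmin b c) / 2)); unfold Rmin in *; destruct Rle_dec; lra. }
  assert (High : forall a b c d, a < b -> c < d ->
            (forall x, a < x < b -> c < x < d) -> b <= d).
  { clear. intros a b c d Hab Hcd E. apply Rnot_lt_le; intros Hlt.
    destruct (E ((b + Rmax a d) / 2)); unfold Rmax in *; destruct Rle_dec; lra. }
  assert (E1 : forall x, a < x < b -> c < x < d) by (intros; apply E; auto).
  assert (E2 : forall x, c < x < d -> a < x < b) by (intros; apply E; auto).
  pose proof (Low _ _ _ _ Hab Hcd E1); pose proof (Low _ _ _ _ Hcd Hab E2).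
  pose proof (High _ _ _ _ Hab Hcd E1); pose proof (High _ _ _ _ Hcd Hab E2). lra.
Qed.

Section FundamentalSystem.
Variables (I : Type) (f : I -> R -> R) (p q u : I -> R).
Hypothesis FS : fundamental_system f p q u.

Lemma fs_pos_simple i : pos_simple (f i) (p i) (q i).
Proof. destruct FS as [H _]. destruct (H i) as [A [B [C _]]]. split; auto. Qed.

Lemma fs_u i : p i < u i < q i.
Proof. apply FS. Qed.

Lemma fs_pq i : 0 <= p i /\ p i < q i /\ q i <= 1.
Proof. apply (ps_pq _ _ _ (fs_pos_simple i)). Qed.

Lemma support_I01 i x : p i <= x <= q i -> I01 x.
Proof. apply (ps_support_I01 _ _ _ (fs_pos_simple i)). Qed.

Lemma p_I01 i : I01 (p i).
Proof. apply support_I01 with i. pose proof (fs_pq i). lra. Qed.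

Lemma q_I01 i : I01 (q i).
Proof. apply support_I01 with i. pose proof (fs_pq i). lra. Qed.

Lemma fs_ib i : incr_bij (f i).
Proof. apply (ps_incr_bij _ _ _ (fs_pos_simple i)). Qed.

Lemma fs_zpow_ib i k : incr_bij (zpow (f i) k).
Proof. apply ib_zpow, fs_ib. Qed.

Lemma zpow_outside l e x : I01 x -> x <= p l \/ q l <= x -> zpow (f l) e x = x.
Proof. intros Hx Hout. apply (ps_zpow_fix _ _ _ (fs_pos_simple l)); auto. lra. Qed.

Definition orb (i : I) (k : Z) : R := zpow (f i) k (u i).

Lemma orb_0 i : orb i 0 = u i.
Proof. reflexivity. Qed.

Lemma orb_1 i : orb i 1 = f i (u i).
Proof. reflexivity. Qed.

Lemma orb_in i k : p i < orb i k < q i.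
Proof. apply (ps_zpow_in _ _ _ (fs_pos_simple i)), fs_u. Qed.

Lemma orb_I01 i k : I01 (orb i k).
Proof. apply support_I01 with i. pose proof (orb_in i k). lra. Qed.

Lemma u_I01 i : I01 (u i).
Proof. apply (orb_I01 i 0). Qed.

Lemma orb_step i k : orb i k < orb i (k+1).
Proof. apply (ps_orbit_step _ _ _ (fs_pos_simple i)), fs_u. Qed.

Lemma orb_le i j k : (j <= k)%Z -> orb i j <= orb i k.
Proof. apply zseq_le, orb_step. Qed.

Lemma orb_block i : block (p i) (q i) (orb i).
Proof.
  pose proof (fs_pq i). split; [|split; [|split; [|split; [|split]]]]; try lra.
  - apply orb_in.
  - apply orb_step.
  - apply (ps_orbit_bracket _ _ _ (fs_pos_simple i)), fs_u.
Qed.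

Lemma u_lt_fu i : u i < f i (u i).
Proof. apply (ps_moves _ _ _ (fs_pos_simple i)), fs_u. Qed.

Lemma fd_support i x : u i <= x <= f i (u i) -> p i < x < q i.
Proof. intros. pose proof (fs_u i); pose proof (orb_in i 1). rewrite orb_1 in *. lra. Qed.

Lemma fd_I01 i x : u i <= x <= f i (u i) -> I01 x.
Proof. intros H. apply support_I01 with i. pose proof (fd_support i x H). lra. Qed.

Lemma fd_zpow i k x : u i <= x <= f i (u i) -> orb i k <= zpow (f i) k x <= orb i (k+1).
Proof.
  intros H. pose proof (fd_I01 i (u i) ltac:(pose proof (u_lt_fu i); lra)).
  pose proof (fd_I01 i (f i (u i)) ltac:(pose proof (u_lt_fu i); lra)).
  pose proof (fd_I01 i x H). unfold orb. split.
  - apply ib_le; auto using fs_zpow_ib. lra.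
  - rewrite zpow_add, zpow_1; auto using fs_ib. apply ib_le; auto using fs_zpow_ib. lra.
Qed.

Lemma fd_zpow_back i k y : orb i k <= y <= orb i (k+1) ->
  u i <= zpow (f i) (-k) y <= f i (u i).
Proof.
  intros H. pose proof (orb_in i k). pose proof (orb_in i (k+1)).
  assert (Iy : I01 y) by (apply support_I01 with i; lra).
  assert (Iu : I01 (u i)) by (apply support_I01 with i; pose proof (fs_u i); lra).
  assert (E1 : zpow (f i) (-k) (orb i k) = u i) by (apply zpow_cancel'; auto using fs_ib).
  assert (E2 : zpow (f i) (-k) (orb i (k+1)) = f i (u i)).
  { unfold orb. rewrite <- zpow_add by auto using fs_ib.
    now replace (-k + (k+1))%Z with 1%Z by lia. }
  rewrite <- E2, <- E1. split; apply ib_le; auto using fs_zpow_ib;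
    first [lra | apply support_I01 with i; lra].
Qed.

Lemma orb_step_apart i k : k <> 0%Z -> orb i (k+1) <= u i \/ f i (u i) <= orb i k.
Proof.
  intros Hk. destruct (Z.le_gt_cases k 0).
  - left. rewrite <- orb_0. apply orb_le; lia.
  - right. rewrite <- orb_1. apply orb_le; lia.
Qed.

Lemma fd_zpow_apart i k x : k <> 0%Z -> u i <= x <= f i (u i) ->
  zpow (f i) k x <= u i \/ f i (u i) <= zpow (f i) k x.
Proof. intros Hk Hx. pose proof (fd_zpow i k x Hx). destruct (orb_step_apart i k Hk); lra. Qed.

Definition inside_fd (l m : I) : Prop := u m <= p l /\ q l <= f m (u m).

Lemma inside_fd_fix l m e y : inside_fd l m -> I01 y -> y <= u m \/ f m (u m) <= y ->
  zpow (f l) e y = y.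
Proof. intros [A B] Hy Hout. apply zpow_outside; auto. lra. Qed.

Lemma inside_fd_stable l m e x : inside_fd l m -> u m <= x <= f m (u m) ->
  u m <= zpow (f l) e x <= f m (u m).
Proof.
  intros [A B] H. destruct (classic (p l < x < q l)) as [Hin|Hout].
  - pose proof (ps_zpow_in _ _ _ (fs_pos_simple l) e x Hin). lra.
  - rewrite zpow_outside; [lra|apply fd_I01 with m; lra|lra].
Qed.

Definition same_triple (i j : I) : Prop := (forall x, I01 x -> f i x = f j x) /\ u i = u j.

Lemma same_triple_sym i j : same_triple i j -> same_triple j i.
Proof. intros [A B]; split; auto. intros; symmetry; auto. Qed.

Lemma same_triple_support i j : same_triple i j -> p i = p j /\ q i = q j.
Proof.
  intros [E _]. pose proof (fs_pq i); pose proof (fs_pq j).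
  apply interval_ext; try lra. intros x.
  destruct (fs_pos_simple i) as [_ [_ [_ [_ [_ Si]]]]].
  destruct (fs_pos_simple j) as [_ [_ [_ [_ [_ Sj]]]]].
  destruct (classic (I01 x)) as [Ix|Nx].
  - rewrite <- Si, <- Sj, E; auto. tauto.
  - unfold I01 in Nx. split; intros; exfalso; apply Nx; lra.
Qed.

Lemma same_triple_zpow i j k x : same_triple i j -> I01 x -> zpow (f i) k x = zpow (f j) k x.
Proof. intros [E _] Hx. apply zpow_ext; auto using fs_ib. Qed.

Lemma same_triple_orb i j k : same_triple i j -> orb i k = orb j k.
Proof.
  intros H. unfold orb. rewrite (proj2 H). apply same_triple_zpow; auto.
  apply support_I01 with j. pose proof (fs_u j); lra.
Qed.

Lemma triple_position i j :
  same_triple i j \/ (q i <= p j \/ q j <= p i) \/ inside_fd i j \/ inside_fd j i.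
Proof.
  destruct (classic (same_triple i j)) as [|N]; auto. right.
  assert (D : (exists x, I01 x /\ f i x <> f j x) \/ u i <> u j).
  { destruct (classic (u i = u j)) as [Eu|]; auto. left. apply NNPP; intros Hn.
    apply N; split; auto. intros x Hx. apply NNPP; intros Hn2. apply Hn; eauto. }
  pose proof (fs_pq i); pose proof (fs_pq j).
  destruct (proj2 FS i j D) as [A|[A|A]]; unfold inside_fd.
  - left. apply NNPP; intros Hn.
    apply (A ((Rmax (p i) (p j) + Rmin (q i) (q j))/2)).
    unfold Rmax, Rmin; repeat destruct Rle_dec; lra.
  - right; left. split; apply A; lra.
  - right; right. split; apply A; lra.
Qed.


Definition G : (R -> R) -> Prop := in_gen f.

Lemma G_ib g : G g -> incr_bij g.
Proof.
  induction 1 as [h E|i g h _ IH E|i g h _ IH E].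
  - apply (ib_ext (fun x => x)); auto using ib_id.
  - apply (ib_ext (fun x => f i (g x))); auto. apply ib_comp; auto using fs_ib.
  - apply (ib_ext (fun x => inv01 (f i) (g x))).
    + apply ib_comp; auto using ib_inv, fs_ib.
    + intros x Hx. destruct (E x Hx). symmetry; apply inv01_unique; auto using fs_ib.
Qed.

Lemma G_ext g h : G g -> (forall x, I01 x -> h x = g x) -> G h.
Proof.
  intros Hg; revert h. induction Hg as [g E|i g g' Hg IH E|i g g' Hg IH E]; intros h Eh.
  - apply gen_id. intros; rewrite Eh; auto.
  - apply (gen_mul f i g h); auto. intros; rewrite Eh; auto.
  - apply (gen_inv f i g h); auto. intros; rewrite Eh; auto.
Qed.

Lemma G_id : G (fun x => x).
Proof. apply gen_id; auto. Qed.

Lemma G_comp g h : G g -> G h -> G (fun x => g (h x)).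
Proof.
  intros Hg Hh. pose proof (G_ib h Hh) as Ih.
  induction Hg as [g E|i g g' Hg IH E|i g g' Hg IH E].
  - apply (G_ext h); auto. intros; apply E, ib_I01; auto.
  - apply (gen_mul f i (fun x => g (h x))); auto. intros; apply E, ib_I01; auto.
  - apply (gen_inv f i (fun x => g (h x))); auto. intros; apply E, ib_I01; auto.
Qed.

Lemma G_gen i : G (f i).
Proof. apply (gen_mul f i (fun x => x)); [apply G_id|auto]. Qed.

Lemma G_gen_inv i : G (inv01 (f i)).
Proof.
  apply (gen_inv f i (fun x => x)); [apply G_id|].
  intros; split; [apply inv01_I01|apply inv01_r]; auto using fs_ib.
Qed.

Lemma G_zpow_of t k : G t -> G (inv01 t) -> G (zpow t k).
Proof.
  intros Ht Hi. pose proof (G_ib t Ht) as It.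
  induction k as [|k IH|k IH] using Z_step_ind.
  - apply G_id.
  - apply (G_ext (fun x => t (zpow t k x))); [apply G_comp; auto|].
    intros; rewrite zpow_succ; auto.
  - apply (G_ext (fun x => inv01 t (zpow t k x))); [apply G_comp; auto|].
    intros; rewrite zpow_pred; auto.
Qed.

Lemma G_zpow i k : G (zpow (f i) k).
Proof. apply G_zpow_of; auto using G_gen, G_gen_inv. Qed.

Lemma G_inv g : G g -> G (inv01 g).
Proof.
  intros Hg. pose proof (G_ib g Hg) as Ig.
  induction Hg as [g E|i g g' Hg IH E|i g g' Hg IH E];
    [|pose proof (G_ib g Hg) as Ig0..].
  - apply (G_ext (fun x => x)); auto using G_id. intros x Hx. apply inv01_unique; auto.
  -
    apply (G_ext (fun x => inv01 g (inv01 (f i) x))); [apply G_comp; auto using G_gen_inv|].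
    intros x Hx. assert (J : I01 (inv01 (f i) x)) by (apply inv01_I01; auto using fs_ib).
    apply inv01_unique; auto using inv01_I01.
    rewrite E, !inv01_r; auto using fs_ib, inv01_I01.
  -
    apply (G_ext (fun x => inv01 g (f i x))); [apply G_comp; auto using G_gen|].
    intros x Hx. assert (J : I01 (f i x)) by (apply ib_I01; auto using fs_ib).
    assert (J2 : I01 (inv01 g (f i x))) by (apply inv01_I01; auto).
    apply inv01_unique; auto. destruct (E _ J2) as [J3 E2].
    apply (ib_inj (f i)); auto using fs_ib. rewrite E2, inv01_r; auto.
Qed.


(* The index i records the generator the block
   comes from. *)
Inductive canonical_block : I -> R -> R -> (Z -> R) -> Prop :=
| cb_gen i : canonical_block i (p i) (q i) (orb i)
| cb_reindex i a b o n : canonical_block i a b o ->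
    canonical_block i a b (fun k => o (k + n)%Z)
| cb_push i a b o l k : canonical_block i a b o -> u l <= a -> b <= f l (u l) ->
    canonical_block i (zpow (f l) k a) (zpow (f l) k b) (fun k' => zpow (f l) k (o k')).

Lemma cb_block i a b o : canonical_block i a b o -> block a b o.
Proof.
  induction 1; auto using orb_block, block_reindex.
  apply block_transport; auto using fs_zpow_ib.
Qed.

Lemma cb_eq i a b o a' b' o' : canonical_block i a b o -> a = a' -> b = b' ->
  (forall k, o k = o' k) -> canonical_block i a' b' o'.
Proof.
  intros H <- <- E. replace o' with o; auto. apply functional_extensionality; auto.
Qed.

Lemma cb_fixed i a b o (g : R -> R) : canonical_block i a b o ->
  (forall x, a <= x <= b -> g x = x) ->
  canonical_block i (g a) (g b) (fun k => g (o k)).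
Proof.
  intros H Fix. pose proof (cb_block _ _ _ _ H) as B. pose proof (block_ab _ _ _ B).
  apply (cb_eq _ _ _ _ _ _ _ H); try (symmetry; apply Fix; lra).
  intros k. pose proof (block_in _ _ _ B k). symmetry; apply Fix; lra.
Qed.

Definition moves_canonically (i : I) (a b : R) (o : Z -> R) : Prop :=
  forall l e, canonical_block i (zpow (f l) e a) (zpow (f l) e b) (fun k => zpow (f l) e (o k)).

Lemma cb_move_gen i : moves_canonically i (p i) (q i) (orb i).
Proof.
  intros l e. pose proof (fs_pq i); pose proof (fs_pq l).
  pose proof (fs_u i); pose proof (u_lt_fu i).
  destruct (triple_position i l) as [Same|[Disj|[Inl|Inl]]].
  - (* f_l = f_i: the ruler is reindexed by e *)
    destruct (same_triple_support _ _ Same) as [Ep Eq].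
    apply (cb_eq _ _ _ _ _ _ _ (cb_reindex _ _ _ _ e (cb_gen i))).
    + rewrite zpow_outside; auto using p_I01. lra.
    + rewrite zpow_outside; auto using q_I01. lra.
    + intros k. unfold orb.
      rewrite (same_triple_zpow l i), <- zpow_add; auto using fs_ib, same_triple_sym.
      * f_equal. lia.
      * apply u_I01.
      * apply orb_I01.
  - apply cb_fixed; [apply cb_gen|]. intros x Hx.
    apply zpow_outside; [apply support_I01 with i; lra|destruct Disj; [left|right]; lra].
  - apply cb_push; [apply cb_gen|apply Inl..].
  - (* S_l lies in the open fundamental domain (orb i 0, orb i 1) *)
    apply (cb_eq _ _ _ _ _ _ _ (cb_gen i)).
    + symmetry. apply (inside_fd_fix l i); auto using p_I01. left; lra.
    + symmetry. apply (inside_fd_fix l i); auto using q_I01.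
      right. pose proof (orb_in i 1). rewrite orb_1 in *. lra.
    + intros k. symmetry. apply (inside_fd_fix l i); auto using orb_I01.
      rewrite <- orb_0, <- orb_1.
      destruct (Z.le_gt_cases k 0); [left|right]; apply orb_le; lia.
Qed.

Lemma cb_move_push i a b o m r : canonical_block i a b o -> u m <= a -> b <= f m (u m) ->
  moves_canonically i a b o ->
  moves_canonically i (zpow (f m) r a) (zpow (f m) r b) (fun k => zpow (f m) r (o k)).
Proof.
  intros H Ha Hb IH l e. pose proof (cb_block _ _ _ _ H) as B. pose proof (block_ab _ _ _ B).
  assert (Fd : forall x, a <= x <= b -> u m <= x <= f m (u m)) by (intros; lra).
  assert (InS : forall x, a <= x <= b -> p m <= zpow (f m) r x <= q m).
  { intros x Hx. apply (ps_zpow_support _ _ _ (fs_pos_simple m)).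
    pose proof (fd_support m x (Fd x Hx)). lra. }
  destruct (triple_position m l) as [Same|[Disj|[Inl|Inl]]].
  - (* f_l = f_m: push by e + r *)
    pose proof (block_a _ _ _ B); pose proof (block_b _ _ _ B); pose proof (block_o _ _ _ B).
    assert (Sym : same_triple l m) by (apply same_triple_sym; auto).
    apply (cb_eq _ _ _ _ _ _ _ (cb_push _ _ _ _ m (e + r) H Ha Hb));
      [| |intros k]; rewrite (same_triple_zpow l m), zpow_add;
      first [reflexivity | auto using fs_ib, zpow_I01].
  - (* the pushed block lies in S_m, disjoint from S_l *)
    apply cb_fixed; [apply cb_push; auto|]. intros x Hx.
    pose proof (InS a ltac:(lra)); pose proof (InS b ltac:(lra)).
    apply zpow_outside; [apply support_I01 with m; lra|destruct Disj; [left|right]; lra].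
  - (* the pushed block lies in S_m, inside I_l *)
    destruct Inl as [Hl1 Hl2].
    pose proof (InS a ltac:(lra)); pose proof (InS b ltac:(lra)).
    apply cb_push; [apply cb_push; auto|lra|lra].
  - destruct (Z.eq_dec r 0) as [->|Nr].
    + (* f_m^0 is the identity: move the original block, which stays in I_m *)
      apply (cb_eq _ _ _ _ _ _ _ (cb_push _ _ _ _ m 0 (IH l e)
               (proj1 (inside_fd_stable l m e a Inl (Fd a ltac:(lra))))
               (proj2 (inside_fd_stable l m e b Inl (Fd b ltac:(lra))))));
        reflexivity.
    + (* the pushed block lies in the r-th step of the ruler of m, outside I_m *)
      apply cb_fixed; [apply cb_push; auto|]. intros x Hx.
      pose proof (fd_zpow m r a (Fd a ltac:(lra))); pose proof (fd_zpow m r b (Fd b ltac:(lra))).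
      pose proof (orb_in m r); pose proof (orb_in m (r+1)).
      apply (inside_fd_fix l m); auto; [apply support_I01 with m; lra|].
      destruct (orb_step_apart m r Nr); [left|right]; lra.
Qed.


Lemma cb_move i a b o : canonical_block i a b o -> moves_canonically i a b o.
Proof.
  induction 1 as [i|i a b o n H IH|i a b o m r H IH Ha Hb].
  - apply cb_move_gen.
  - intros l e. apply (cb_reindex _ _ _ _ n (IH l e)).
  - apply cb_move_push; auto.
Qed.

Lemma cb_G g i a b o : G g -> canonical_block i a b o ->
  canonical_block i (g a) (g b) (fun k => g (o k)).
Proof.
  intros Hg. revert i a b o.
  induction Hg as [g E|l g h Hg IH E|l g h Hg IH E]; intros i a b o H;
    pose proof (cb_block _ _ _ _ H) as B;
    pose proof (block_a _ _ _ B); pose proof (block_b _ _ _ B); pose proof (block_o _ _ _ B).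
  - apply (cb_eq _ _ _ _ _ _ _ H); [| |intros k]; symmetry; auto.
  - apply (cb_eq _ _ _ _ _ _ _ (cb_move _ _ _ _ (IH _ _ _ _ H) l 1%Z));
      [| |intros k]; symmetry; auto.
  - (* h = f_l^{-1} g *)
    pose proof (G_ib g Hg) as Ig.
    assert (Eh : forall x, I01 x -> zpow (f l) (-1) (g x) = h x).
    { intros x Hx. rewrite zpow_m1. apply inv01_unique; auto using fs_ib; apply E; auto. }
    apply (cb_eq _ _ _ _ _ _ _ (cb_move _ _ _ _ (IH _ _ _ _ H) l (-1)%Z));
      [| |intros k]; auto.
Qed.

Lemma cb_push_bounds j c d o l k : canonical_block j c d o -> u l <= c -> d <= f l (u l) ->
  orb l k <= zpow (f l) k c /\ zpow (f l) k d <= orb l (k+1).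
Proof.
  intros H Hc Hd. pose proof (block_ab _ _ _ (cb_block _ _ _ _ H)).
  pose proof (fd_zpow l k c ltac:(lra)); pose proof (fd_zpow l k d ltac:(lra)). lra.
Qed.

Lemma zpow_conj_seq l k (o : Z -> R) : (forall j, I01 (o j)) ->
  (fun j => zpow (f l) k (zpow (f l) (-k) (o j))) = o.
Proof. intros Io. apply functional_extensionality; intros; apply zpow_cancel; auto using fs_ib. Qed.

Lemma nested_or_disjoint_gen i j c d o : canonical_block j c d o ->
  nested_or_disjoint (p i) (q i) (orb i) c d o.
Proof.
  unfold nested_or_disjoint, disjoint_iv.
  pose proof (fs_u i) as Ui; pose proof (u_lt_fu i) as Vi; pose proof (orb_in i 1) as Wi.
  rewrite orb_1 in Wi.
  induction 1 as [j|j a b o n H IH|j a b o l k H IH Ha Hb].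
  - pose proof (fs_u j); pose proof (u_lt_fu j); pose proof (orb_in j 1); rewrite orb_1 in *.
    destruct (triple_position i j) as [Same|[Disj|[[I1 I2]|[I1 I2]]]].
    + destruct (same_triple_support _ _ Same) as [E1 E2]. do 3 right.
      split; [|split]; auto. exists 0%Z; intros k. rewrite Z.add_0_r. symmetry; apply same_triple_orb; auto.
    + left; lra.
    + right; right; left. exists 0%Z. rewrite orb_0; simpl; rewrite orb_1. lra.
    + right; left. exists 0%Z. rewrite orb_0; simpl; rewrite orb_1. lra.
  - destruct IH as [A|[A|[A|A]]]; auto using in_step_reindex, same_block_reindex_r.
  - pose proof (cb_push_bounds _ _ _ _ l k H Ha Hb) as [B1 B2].
    pose proof (orb_in l k); pose proof (orb_in l (k+1)).
    pose proof (fs_u l); pose proof (u_lt_fu l); pose proof (orb_in l 1); rewrite orb_1 in *.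
    destruct (triple_position i l) as [Same|[Disj|[[I1 I2]|[I1 I2]]]].
    + right; left. exists k. rewrite !(same_triple_orb i l); auto.
    + left; lra.
    + destruct (Z.eq_dec k 0) as [->|Nk]; [exact IH|].
      left. destruct (orb_step_apart l k Nk); lra.
    + right; left. exists 0%Z. rewrite orb_0; simpl; rewrite orb_1. lra.
Qed.

Lemma nested_or_disjoint_all i a b o j c d o' :
  canonical_block i a b o -> canonical_block j c d o' -> nested_or_disjoint a b o c d o'.
Proof.
  intros H. revert j c d o'.
  induction H as [i|i a b o n H IH|i a b o l k H IH Ha Hb]; intros j c d o' H'.
  - eapply nested_or_disjoint_gen; eauto.
  - apply nested_or_disjoint_reindex_l; eauto.
  - (* pull the second block back by f_l^{-k}, compare, and push forward *)
    pose proof (cb_move _ _ _ _ H' l (-k)%Z) as H2.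
    pose proof (cb_block _ _ _ _ H') as B'.
    pose proof (nested_or_disjoint_transport (zpow (f l) k) _ _ _ _ _ _ (fs_zpow_ib l k)
                  (cb_block _ _ _ _ H) (cb_block _ _ _ _ H2) (IH _ _ _ _ H2)) as R.
    pose proof (block_a _ _ _ B'); pose proof (block_b _ _ _ B'); pose proof (block_o _ _ _ B').
    rewrite !zpow_cancel, zpow_conj_seq in R by auto using fs_ib. exact R.
Qed.

Lemma disjoint_or_same_gen i j c d o : canonical_block j c d o -> j = i ->
  disjoint_or_same (p i) (q i) (orb i) c d o.
Proof.
  unfold disjoint_or_same, disjoint_iv.
  pose proof (fs_u i) as Ui; pose proof (u_lt_fu i) as Vi; pose proof (orb_in i 1) as Wi.
  rewrite orb_1 in Wi.
  induction 1 as [j'|j' a b o' n H IH|j' a b o' l k H IH Ha Hb]; intros ->.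
  - right. split; [|split]; auto. exists 0%Z; intros; rewrite Z.add_0_r; auto.
  - destruct (IH eq_refl) as [A|A]; auto using same_block_reindex_r.
  - pose proof (cb_push_bounds _ _ _ _ l k H Ha Hb) as [B1 B2].
    pose proof (block_ab _ _ _ (cb_block _ _ _ _ H)).
    pose proof (orb_in l k); pose proof (orb_in l (k+1)).
    pose proof (fs_u l); pose proof (u_lt_fu l); pose proof (orb_in l 1); rewrite orb_1 in *.
    destruct (triple_position i l) as [Same|[Disj|[[I1 I2]|[I1 I2]]]].
    + (* the block would lie strictly inside S_i = S_l *)
      exfalso. destruct (same_triple_support _ _ Same) as [E1 E2].
      destruct (IH eq_refl) as [[A|A]|[A1 [A2 _]]]; lra.
    + left; lra.
    + destruct (Z.eq_dec k 0) as [->|Nk]; [exact (IH eq_refl)|].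
      left. destruct (orb_step_apart l k Nk); lra.
    + (* the block would lie strictly inside I_i *)
      exfalso. destruct (IH eq_refl) as [[A|A]|[A1 [A2 _]]]; lra.
Qed.

Lemma disjoint_or_same_all i a b o c d o' :
  canonical_block i a b o -> canonical_block i c d o' -> disjoint_or_same a b o c d o'.
Proof.
  intros H. revert c d o'.
  induction H as [i|i a b o n H IH|i a b o l k H IH Ha Hb]; intros c d o' H'.
  - eapply disjoint_or_same_gen; eauto.
  - apply disjoint_or_same_reindex_l; eauto.
  - (* pull the second block back by f_l^{-k}, compare, and push forward *)
    pose proof (cb_move _ _ _ _ H' l (-k)%Z) as H2.
    pose proof (cb_block _ _ _ _ H') as B'.
    pose proof (disjoint_or_same_transport (zpow (f l) k) _ _ _ _ _ _ (fs_zpow_ib l k)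
                  (cb_block _ _ _ _ H) (cb_block _ _ _ _ H2) (IH _ _ _ H2)) as R.
    pose proof (block_a _ _ _ B'); pose proof (block_b _ _ _ B'); pose proof (block_o _ _ _ B').
    rewrite !zpow_cancel, zpow_conj_seq in R by auto using fs_ib. exact R.
Qed.

Lemma cb_translation i a b o : canonical_block i a b o ->
  exists t, G t /\ t a = a /\ t b = b /\ forall k, t (o k) = o (k+1)%Z.
Proof.
  induction 1 as [i|i a b o n H IH|i a b o l k H IH Ha Hb].
  - exists (f i). pose proof (fs_pq i).
    split; [apply G_gen|split; [|split]].
    + apply zpow_outside with (e := 1%Z); auto using p_I01. lra.
    + apply zpow_outside with (e := 1%Z); auto using q_I01. lra.
    + intros k. unfold orb. rewrite zpow_succ; auto using fs_ib. apply u_I01.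
  - destruct IH as [t [Gt [T1 [T2 T3]]]]. exists t; split; [|split; [|split]]; auto.
    intros k. rewrite T3. f_equal; lia.
  - (* conjugate the translation of the original block by f_l^k *)
    destruct IH as [t [Gt [T1 [T2 T3]]]]. pose proof (cb_block _ _ _ _ H) as B.
    exists (fun x => zpow (f l) k (t (zpow (f l) (-k) x))).
    split; [|split; [|split]].
    + apply (G_comp (zpow (f l) k) (fun x => t (zpow (f l) (-k) x))); [apply G_zpow|].
      apply G_comp; [auto|apply G_zpow].
    + rewrite zpow_cancel', T1 by eauto using fs_ib, block_a. reflexivity.
    + rewrite zpow_cancel', T2 by eauto using fs_ib, block_b. reflexivity.
    + intros k'. rewrite zpow_cancel', T3 by eauto using fs_ib, block_o. reflexivity.
Qed.

Inductive word (L : list I) : (R -> R) -> Prop :=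
| word_id h : (forall x, I01 x -> h x = x) -> word L h
| word_step l e g h : In l L -> word L g ->
    (forall x, I01 x -> h x = zpow (f l) e (g x)) -> word L h.

Lemma word_ib L g : word L g -> incr_bij g.
Proof.
  induction 1 as [h E|l e g h _ _ IH E].
  - apply (ib_ext (fun x => x)); auto using ib_id.
  - apply (ib_ext (fun x => zpow (f l) e (g x))); auto. apply ib_comp; auto using fs_zpow_ib.
Qed.

Lemma word_incl L L' g : word L g -> incl L L' -> word L' g.
Proof.
  induction 1 as [h E|l e g h Hl _ IH E]; intros Hi.
  - apply word_id; auto.
  - apply (word_step L' l e g h); auto.
Qed.

Lemma G_word g : G g -> exists L, word L g.
Proof.
  induction 1 as [h E|i g h Hg [L IH] E|i g h Hg [L IH] E].
  - exists nil; apply word_id; auto.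
  - exists (i :: L). apply (word_step _ i 1%Z g h); [left; auto|..]; auto.
    apply (word_incl L); auto. intros x Hx; right; auto.
  - exists (i :: L). apply (word_step _ i (-1)%Z g h); [left; auto|..].
    + apply (word_incl L); auto. intros x Hx; right; auto.
    + intros x Hx. rewrite zpow_m1. destruct (E x Hx) as [Ih Eh].
      symmetry. apply inv01_unique; auto using fs_ib.
Qed.

Lemma word_fix L g x : word L g -> I01 x -> (forall l, In l L -> ~ (p l < x < q l)) -> g x = x.
Proof.
  intros Hg Hx Hl. induction Hg as [h E|l e g h Hin _ IH E]; auto.
  rewrite E, IH; auto. apply (ps_zpow_fix _ _ _ (fs_pos_simple l)); auto.
Qed.

Definition inside_fd_b (m l : I) : bool :=
  if excluded_middle_informative (inside_fd l m) then true else false.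

Definition letters_in_fd (m : I) (L : list I) : list I := filter (inside_fd_b m) L.

Lemma letters_in_fd_spec m L l : In l (letters_in_fd m L) <-> In l L /\ inside_fd l m.
Proof.
  unfold letters_in_fd, inside_fd_b. rewrite filter_In.
  destruct excluded_middle_informative; split; intros [A B]; auto; easy.
Qed.

Lemma letters_in_fd_shorter m L : In m L -> (length (letters_in_fd m L) < length L)%nat.
Proof.
  assert (Nm : inside_fd_b m m = false).
  { unfold inside_fd_b, inside_fd. destruct excluded_middle_informative as [[A _]|]; auto.
    pose proof (fs_u m); lra. }
  unfold letters_in_fd. induction L as [|a L IH]; simpl; [tauto|].
  intros [->|Hm].
  - rewrite Nm. pose proof (filter_length_le (inside_fd_b m) L). lia.
  - specialize (IH Hm). destruct (inside_fd_b m a); simpl; lia.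
Qed.

Lemma word_fd_stable m L g x : word (letters_in_fd m L) g -> u m <= x <= f m (u m) ->
  u m <= g x <= f m (u m).
Proof.
  intros Hg Hx. induction Hg as [h E|l e g h Hin _ IH E].
  - rewrite E by (apply fd_I01 with m; exact Hx). exact Hx.
  - rewrite E by (apply fd_I01 with m; auto). apply letters_in_fd_spec in Hin.
    apply inside_fd_stable; tauto.
Qed.

Lemma word_fd_fix m L g y : word (letters_in_fd m L) g -> I01 y ->
  y <= u m \/ f m (u m) <= y -> g y = y.
Proof.
  intros Hg Hy Hout. apply (word_fix _ _ _ Hg Hy). intros l Hl.
  apply letters_in_fd_spec in Hl as [_ [A B]]. destruct Hout; lra.
Qed.

(* A list of letters is adapted to m when each letter has the same triple as
   m, has support disjoint from S_m, or has support inside I_m: this is the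
   situation for a letter m of maximal support around a given point. *)
Definition adapted (m : I) (L : list I) : Prop :=
  forall l, In l L -> same_triple l m \/ (q l <= p m \/ q m <= p l) \/ inside_fd l m.

Definition decomposes (m : I) (L : list I) (g : R -> R) (s : Z) : Prop :=
  forall k : Z, exists gk, word (letters_in_fd m L) gk /\
    forall y, orb m k <= y <= orb m (k+1) ->
      g y = zpow (f m) (k+s)%Z (gk (zpow (f m) (-k)%Z y)).

Lemma step_I01 m k y : orb m k <= y <= orb m (k+1) -> I01 y.
Proof. intros. apply support_I01 with m. pose proof (orb_in m k); pose proof (orb_in m (k+1)). lra. Qed.

Section Decomposition.
Variables (m : I) (L : list I) (g h : R -> R) (s : Z) (l : I) (e : Z).
Hypothesis Hdec : decomposes m L g s.
Hypothesis Eh : forall x, I01 x -> h x = zpow (f l) e (g x).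

Lemma decompose_same : same_triple l m -> decomposes m L h (s + e).
Proof.
  intros Same k. destruct (Hdec k) as [gk [Hgk Hf]]. exists gk; split; auto.
  intros y Hy. pose proof (step_I01 m k y Hy). rewrite Eh, Hf by auto.
  pose proof (fd_I01 m _ (word_fd_stable _ _ _ _ Hgk (fd_zpow_back m k y Hy))).
  rewrite (same_triple_zpow l m), <- zpow_add by auto using fs_ib, zpow_I01.
  f_equal; lia.
Qed.

Lemma decompose_disjoint : q l <= p m \/ q m <= p l -> decomposes m L h s.
Proof.
  intros Disj k. destruct (Hdec k) as [gk [Hgk Hf]]. exists gk; split; auto.
  intros y Hy. pose proof (step_I01 m k y Hy). rewrite Eh, Hf by auto.
  pose proof (word_fd_stable _ _ _ _ Hgk (fd_zpow_back m k y Hy)) as Hz.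
  pose proof (fd_support m _ Hz) as Sz.
  pose proof (ps_zpow_in _ _ _ (fs_pos_simple m) (k+s) _ Sz).
  apply zpow_outside; [apply support_I01 with m; lra|destruct Disj; [right|left]; lra].
Qed.

Lemma decompose_inside : In l L -> inside_fd l m -> decomposes m L h s.
Proof.
  intros Hl Inl k. destruct (Hdec k) as [gk [Hgk Hf]].
  destruct (Z.eq_dec (k+s) 0) as [E0|N0].
  - (* on this step f_m^(k+s) is trivial: the letter joins gk *)
    exists (fun z => zpow (f l) e (gk z)). split.
    + apply (word_step _ l e gk); auto. apply letters_in_fd_spec; auto.
    + intros y Hy. pose proof (step_I01 m k y Hy). rewrite Eh, Hf, E0 by auto. reflexivity.
  - (* otherwise g moves the step outside I_m, where f_l acts trivially *)
    exists gk; split; auto.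
    intros y Hy. pose proof (step_I01 m k y Hy). rewrite Eh, Hf by auto.
    pose proof (word_fd_stable _ _ _ _ Hgk (fd_zpow_back m k y Hy)) as Hz.
    apply (inside_fd_fix l m); [exact Inl| |apply fd_zpow_apart; auto].
    apply zpow_I01; [apply fs_ib|apply fd_I01 with m; exact Hz].
Qed.

End Decomposition.

Lemma decompose_word m L g : adapted m L -> word L g -> exists s, decomposes m L g s.
Proof.
  intros Ad. induction 1 as [h E|l e g h Hl _ [s IH] E].
  - exists 0%Z. intros k. exists (fun x => x). split; [apply word_id; auto|].
    intros y Hy. pose proof (step_I01 m k y Hy). cbv beta.
    rewrite Z.add_0_r, E, zpow_cancel; auto using fs_ib.
  - destruct (Ad l Hl) as [Same|[Disj|Inl]].
    + exists (s + e)%Z. eapply decompose_same; eauto.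
    + exists s. eapply decompose_disjoint; eauto.
    + exists s. eapply decompose_inside; eauto.
Qed.

Lemma decompose_orbit m L g s : decomposes m L g s -> forall k, g (orb m k) = orb m (k+s).
Proof.
  intros Hd k. destruct (Hd k) as [gk [Hgk Hf]].
  pose proof (orb_step m k).
  assert (E0 : zpow (f m) (-k) (orb m k) = u m).
  { apply zpow_cancel'; [apply fs_ib|apply u_I01]. }
  rewrite Hf, E0 by lra.
  rewrite (word_fd_fix m L gk (u m)); [reflexivity|auto|apply u_I01|left; lra].
Qed.

Lemma decompose_conj m L g k : decomposes m L g 0 ->
  exists gk, word (letters_in_fd m L) gk /\
    forall z, u m <= z <= f m (u m) -> g (zpow (f m) k z) = zpow (f m) k (gk z).
Proof.
  intros Hd. destruct (Hd k) as [gk [Hgk Hf]]. exists gk; split; auto.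
  intros z Hz. pose proof (fd_I01 m z Hz).
  rewrite Hf, Z.add_0_r, zpow_cancel'; auto using fs_ib, fd_zpow.
Qed.

Lemma max_letter L x : (exists l, In l L /\ p l < x < q l) ->
  exists m, In m L /\ p m < x < q m /\ adapted m L.
Proof.
  intros Ex.
  destruct (list_argmax L (fun l => p l < x < q l) (fun l => q l - p l) Ex)
    as [m [Hm [Pm Mm]]].
  exists m; split; [auto|split; [auto|]]. intros l Hl.
  destruct (triple_position l m) as [A|[A|[A|[I1 I2]]]]; auto.
  (* S_m inside I_l would make S_l strictly longer than S_m *)
  exfalso. pose proof (fs_u l); pose proof (u_lt_fu l); pose proof (orb_in l 1).
  rewrite orb_1 in *. specialize (Mm l Hl ltac:(lra)). lra.
Qed.

Lemma adapted_fix_ends m L g y : adapted m L -> word L g -> (y = p m \/ y = q m) -> g y = y.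
Proof.
  intros Ad Hg Hy. pose proof (fs_u m); pose proof (u_lt_fu m); pose proof (orb_in m 1).
  rewrite orb_1 in *.
  apply (word_fix L); [auto|destruct Hy as [->| ->]; auto using p_I01, q_I01|].
  intros l Hl Hin. destruct (Ad l Hl) as [A|[A|[A1 A2]]].
  - destruct (same_triple_support _ _ A) as [E1 E2]. destruct Hy; lra.
  - destruct Hy, A; lra.
  - destruct Hy; lra.
Qed.

Lemma fd_zpow_back_strict i k y : orb i k < y < orb i (k+1) ->
  u i < zpow (f i) (-k) y < f i (u i).
Proof.
  intros H. pose proof (orb_I01 i k); pose proof (orb_I01 i (k+1)).
  assert (Iy : I01 y) by (apply (step_I01 i k); lra).
  assert (E1 : zpow (f i) (-k) (orb i k) = u i) by (apply zpow_cancel'; auto using fs_ib, u_I01).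
  assert (E2 : zpow (f i) (-k) (orb i (k+1)) = f i (u i)).
  { unfold orb. rewrite <- zpow_add by auto using fs_ib, u_I01.
    now replace (-k + (k+1))%Z with 1%Z by lia. }
  rewrite <- E2, <- E1. split; apply ib_lt; auto using fs_zpow_ib; lra.
Qed.

Definition translating_block (g : R -> R) (x : R) (i : I) (a b : R) (o : Z -> R) : Prop :=
  canonical_block i a b o /\ a < x < b /\ g a = a /\ g b = b /\
  exists s, s <> 0%Z /\ forall k, g (o k) = o (k+s)%Z.

Lemma push_translating_block m k g gk x i a b o :
  incr_bij gk -> gk (u m) = u m -> gk (f m (u m)) = f m (u m) ->
  (forall z, u m <= z <= f m (u m) -> g (zpow (f m) k z) = zpow (f m) k (gk z)) ->
  u m < x < f m (u m) -> translating_block gk x i a b o ->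
  translating_block g (zpow (f m) k x) i (zpow (f m) k a) (zpow (f m) k b)
    (fun j => zpow (f m) k (o j)).
Proof.
  intros Igk Fu Fv Conj Hx [HC [Hab [Ga [Gb [s [Ns Hs]]]]]].
  pose proof (cb_block _ _ _ _ HC) as B.
  (* gk has no fixed point inside (a,b), so the block lies in I_m *)
  assert (Ha : u m <= a).
  { apply Rnot_lt_le; intros Hlt.
    apply (shift_no_fix a b o B gk s Igk Hs Ns (u m)); auto. lra. }
  assert (Hb : b <= f m (u m)).
  { apply Rnot_lt_le; intros Hlt.
    apply (shift_no_fix a b o B gk s Igk Hs Ns (f m (u m))); auto. lra. }
  pose proof (block_in _ _ _ B) as Ho.
  pose proof (fd_I01 m a ltac:(lra)); pose proof (fd_I01 m b ltac:(lra)); pose proof (fd_I01 m x ltac:(lra)).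
  split; [apply cb_push; auto|split; [|split; [|split]]].
  - split; apply ib_lt; auto using fs_zpow_ib; lra.
  - rewrite Conj, Ga by lra. reflexivity.
  - rewrite Conj, Gb by lra. reflexivity.
  - exists s; split; auto. intros j. pose proof (Ho j).
    rewrite Conj, Hs by lra. reflexivity.
Qed.

Lemma translating_block_exists n : forall L g x, (length L <= n)%nat -> word L g ->
  I01 x -> g x <> x -> exists i a b o, translating_block g x i a b o.
Proof.
  induction n as [|n IHn]; intros L g x HL Hg Hx Hm.
  { exfalso. apply Hm, (word_fix L); auto. intros l Hl. destruct L; simpl in *; [easy|lia]. }
  assert (Ex : exists l, In l L /\ p l < x < q l).
  { apply NNPP; intros N. apply Hm, (word_fix L); auto. intros l Hl Hin. apply N; eauto. }
  destruct (max_letter L x Ex) as [m [HmL [Pm Ad]]].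
  destruct (decompose_word m L g Ad Hg) as [s Hs].
  pose proof (decompose_orbit m L g s Hs) as Horb.
  destruct (Z.eq_dec s 0) as [->|Ns].
  2:{ (* g translates the ruler of m itself *)
      exists m, (p m), (q m), (orb m).
      split; [apply cb_gen|split; [auto|split; [|split]]];
        [apply (adapted_fix_ends m L); auto..|exists s; auto]. }
  (* g fixes the ruler of m: work in the step containing x *)
  destruct (orb_block m) as [_ [_ [_ [_ [_ Br]]]]]. destruct (Br x Pm) as [k [Hk1 Hk2]].
  assert (Hk : orb m k < x).
  { destruct Hk1 as [|E]; auto. exfalso. apply Hm. rewrite <- E, Horb. f_equal; lia. }
  destruct (decompose_conj m L g k Hs) as [gk [Hgk Conj]].
  pose proof (word_ib _ _ Hgk) as Igk.
  set (x' := zpow (f m) (-k) x).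
  assert (Ex' : zpow (f m) k x' = x) by (apply zpow_cancel; auto using fs_ib).
  pose proof (fd_zpow_back_strict m k x ltac:(lra)) as Hx'. fold x' in Hx'.
  assert (Mx' : gk x' <> x').
  { intros E. apply Hm. rewrite <- Ex', Conj, E by lra. reflexivity. }
  pose proof (letters_in_fd_shorter m L HmL).
  destruct (IHn (letters_in_fd m L) gk x' ltac:(lia) Hgk ltac:(apply fd_I01 with m; lra) Mx')
    as [i [a [b [o Hblock]]]].
  exists i, (zpow (f m) k a), (zpow (f m) k b), (fun j => zpow (f m) k (o j)).
  rewrite <- Ex'. apply push_translating_block with gk; auto.
  - apply (word_fd_fix m L); auto using u_I01. left; lra.
  - apply (word_fd_fix m L); [auto|apply fd_I01 with m; pose proof (u_lt_fu m); lra|right; lra].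
Qed.

Lemma succ_fixed_block a b : succ_fixed G a b -> exists i o, canonical_block i a b o.
Proof.
  intros [g [Hg [H0 [Hab [H1 [Ga [Gb Hn]]]]]]].
  destruct (G_word g Hg) as [L HL].
  set (x := (a + b) / 2). assert (Hx : a < x < b) by (unfold x; lra).
  destruct (translating_block_exists (length L) L g x (le_n _) HL ltac:(unfold I01; lra) (Hn x Hx))
    as [i [c [d [o [HC [Hcd [Gc [Gd [s [Ns Hs]]]]]]]]]].
  pose proof (cb_block _ _ _ _ HC) as B. pose proof (G_ib g Hg) as Ig.
  (* g fixes c and d but no point of (a,b), and no point of (c,d) *)
  assert (a = c /\ b = d) as [-> ->].
  { split.
    - destruct (Rtotal_order a c) as [Hl|[He|Hl]]; auto; exfalso.
      + apply (Hn c); auto. lra.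
      + apply (shift_no_fix c d o B g s Ig Hs Ns a); auto. lra.
    - destruct (Rtotal_order b d) as [Hl|[He|Hl]]; auto; exfalso.
      + apply (shift_no_fix c d o B g s Ig Hs Ns b); auto. lra.
      + apply (Hn d); auto. lra. }
  exists i, o; auto.
Qed.

Lemma fs_without_linked : without_linked_fixed_points G.
Proof.
  intros a b c d H1 H2.
  destruct (succ_fixed_block a b H1) as [i [o C]]. destruct (succ_fixed_block c d H2) as [j [o' D]].
  apply (nested_or_disjoint_not_linked a b o c d o'); [eapply cb_block; eauto..|].
  apply (nested_or_disjoint_all i a b o j); auto.
Qed.

Section TranslationNumber.
Variables (i : I) (a b : R) (o : Z -> R).
Hypothesis HC : canonical_block i a b o.

Let B : block a b o := cb_block _ _ _ _ HC.

Lemma stab_fixes_ends g : stab G a b g -> g a = a /\ g b = b.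
Proof.
  intros [Hg [H1 H2]]. pose proof (G_ib g Hg) as Ig.
  pose proof (block_ab _ _ _ B); pose proof (block_a _ _ _ B); pose proof (block_b _ _ _ B).
  destruct (H2 a ltac:(lra)) as [x [Hx Ex]]. destruct (H2 b ltac:(lra)) as [y [Hy Ey]].
  assert (I01 x) by (unfold I01 in *; lra). assert (I01 y) by (unfold I01 in *; lra).
  pose proof (H1 a ltac:(lra)). pose proof (H1 b ltac:(lra)).
  assert (g a <= g x) by (apply ib_le; auto; lra).
  assert (g y <= g b) by (apply ib_le; auto; lra).
  split; lra.
Qed.

Lemma stab_of_fixed g : G g -> g a = a -> g b = b -> stab G a b g.
Proof.
  intros Hg Ga Gb. pose proof (G_ib g Hg) as Ig.
  pose proof (block_ab _ _ _ B); pose proof (block_a _ _ _ B); pose proof (block_b _ _ _ B).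
  split; [auto|split].
  - intros x Hx. assert (I01 x) by (unfold I01 in *; lra).
    rewrite <- Ga, <- Gb at 1. split; apply ib_le; auto; lra.
  - intros y Hy. assert (Iy : I01 y) by (unfold I01 in *; lra).
    destruct (proj2 (proj2 Ig) y Iy) as [x [Hx <-]]. exists x.
    split; [split; apply (ib_le_rev g); auto; lra|auto].
Qed.

Lemma stab_translates g : stab G a b g -> exists n, forall k, g (o k) = o (k+n)%Z.
Proof.
  intros Hs. destruct (stab_fixes_ends g Hs) as [Ga Gb].
  pose proof (cb_G g _ _ _ _ (proj1 Hs) HC) as C2. rewrite Ga, Gb in C2.
  pose proof (block_ab _ _ _ B).
  destruct (disjoint_or_same_all _ _ _ _ _ _ _ HC C2) as [[R|R]|[_ [_ [n Hn]]]]; [lra|lra|eauto].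
Qed.

Definition shift (g : R -> R) : Z :=
  epsilon (inhabits 0%Z) (fun n => forall k, g (o k) = o (k+n)%Z).

Lemma shift_spec g : stab G a b g -> forall k, g (o k) = o (k + shift g)%Z.
Proof. intros H. unfold shift. apply epsilon_spec, stab_translates; auto. Qed.

Lemma shift_unique g n : stab G a b g -> (forall k, g (o k) = o (k+n)%Z) -> shift g = n.
Proof.
  intros H Hn. pose proof (shift_spec g H 0) as E. rewrite Hn in E.
  apply (zseq_inj o) in E; [lia|apply (block_step _ _ _ B)].
Qed.

Lemma shift_rel_translation : rel_translation G a b (fun g => IZR (shift g)).
Proof.
  pose proof (block_ab _ _ _ B).
  split; [|split].
  - intros g h k Hg Hh Hk E. rewrite <- plus_IZR. f_equal.
    apply shift_unique; auto. intros j. rewrite E by apply (block_o _ _ _ B).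
    rewrite (shift_spec h Hh), (shift_spec g Hg). f_equal; lia.
  - intros g Hg. split.
    + intros E. apply eq_IZR in E. exists (o 0%Z). split; [apply (block_in _ _ _ B)|].
      rewrite shift_spec, E; auto.
    + intros [x [Hx Ex]]. destruct (Z.eq_dec (shift g) 0) as [E|N]; [rewrite E; auto|].
      exfalso. exact (shift_no_fix a b o B g _ (G_ib g (proj1 Hg)) (shift_spec g Hg) N x Hx Ex).
  - intros g Hg. split.
    + intros Hp. apply lt_0_IZR in Hp.
      apply (shift_moves_right a b o B g (shift g) (G_ib g (proj1 Hg)) (shift_spec g Hg)); lia.
    + intros Hall. apply IZR_lt. apply Z.nle_gt; intros Hle.
      pose proof (Hall (o 0%Z) (block_in _ _ _ B 0)). rewrite shift_spec in *; auto.
      pose proof (block_le _ _ _ B (0 + shift g) 0 ltac:(lia)). lra.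
Qed.

Section Powers.
Variable t : R -> R.
Hypotheses (Gt : G t) (Ta : t a = a) (Tb : t b = b) (To : forall k, t (o k) = o (k+1)%Z).

Lemma translation_zpow_G n : G (zpow t n).
Proof. apply G_zpow_of; auto using G_inv. Qed.

Lemma translation_zpow_stab n : stab G a b (zpow t n).
Proof.
  pose proof (G_ib t Gt); pose proof (block_a _ _ _ B); pose proof (block_b _ _ _ B).
  apply stab_of_fixed; auto using translation_zpow_G; apply zpow_fix; auto.
Qed.

Lemma translation_zpow_shift n k : zpow t n (o k) = o (k + n)%Z.
Proof.
  pose proof (G_ib t Gt) as It. pose proof (block_o _ _ _ B) as Io. revert k.
  induction n as [|n IH|n IH] using Z_step_ind; intros k.
  - now rewrite Z.add_0_r.
  - rewrite zpow_succ, IH, To; auto. f_equal; lia.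
  - rewrite zpow_pred, IH; auto. apply inv01_unique; auto. rewrite To. f_equal; lia.
Qed.

Lemma rel_translation_zpow tau : rel_translation G a b tau ->
  forall n, tau (zpow t n) = IZR n * tau t.
Proof.
  intros [Hm _]. pose proof (G_ib t Gt) as It.
  pose proof translation_zpow_stab as S.
  assert (St : stab G a b t) by (apply (stab_of_fixed t); auto).
  induction n as [|n IH|n IH] using Z_step_ind.
  - pose proof (Hm _ _ _ (S 0%Z) (S 0%Z) (S 0%Z) (fun x _ => eq_refl)). simpl; lra.
  - rewrite plus_IZR, (Hm t (zpow t n) (zpow t (n+1)) St (S n) (S (n+1)%Z)), IH; [lra|].
    intros x Hx. apply zpow_succ; auto.
  - rewrite minus_IZR.
    assert (tau (zpow t n) = tau t + tau (zpow t (n-1))); [|lra].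
    apply Hm; auto. intros x Hx. rewrite <- zpow_succ by auto. f_equal; lia.
Qed.

(* Every element of the stabilizer differs from a power of t by an element
   with a fixed point, so its translation number is a multiple of tau t. *)
Lemma rel_translation_multiple tau : rel_translation G a b tau ->
  forall g, stab G a b g -> tau g = IZR (shift g) * tau t.
Proof.
  intros Htau g Hg. pose proof Htau as [Hm [Hk _]].
  set (n := shift g). set (h := fun x => zpow t (- n) (g x)).
  destruct (stab_fixes_ends g Hg) as [Ga Gb].
  assert (Sh : stab G a b h).
  { apply stab_of_fixed; unfold h.
    - apply G_comp; [apply translation_zpow_G|exact (proj1 Hg)].
    - rewrite Ga. apply zpow_fix; auto using G_ib. apply (block_a _ _ _ B).
    - rewrite Gb. apply zpow_fix; auto using G_ib. apply (block_b _ _ _ B). }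
  assert (Th : tau h = 0).
  { apply Hk; auto. exists (o 0%Z). split; [apply (block_in _ _ _ B)|].
    unfold h. rewrite shift_spec, translation_zpow_shift by auto. fold n. f_equal; lia. }
  rewrite <- (rel_translation_zpow tau Htau n).
  assert (E : tau g = tau (zpow t n) + tau h); [|lra].
  apply Hm; auto using translation_zpow_stab.
  intros x Hx. unfold h. rewrite zpow_cancel; auto using G_ib.
  apply ib_I01; auto. apply (G_ib g (proj1 Hg)).
Qed.

End Powers.

Lemma rel_translation_cyclic tau : rel_translation G a b tau ->
  exists alpha : R, forall y,
    (exists g, stab G a b g /\ tau g = y) <-> exists n : Z, y = alpha * IZR n.
Proof.
  intros Htau. destruct (cb_translation _ _ _ _ HC) as [t [Gt [Ta [Tb To]]]].
  exists (tau t). intros y. split.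
  - intros [g [Hg <-]]. exists (shift g).
    rewrite (rel_translation_multiple t Gt Ta Tb To tau Htau g Hg). lra.
  - intros [n ->]. exists (zpow t n). split; [apply translation_zpow_stab; auto|].
    rewrite (rel_translation_zpow t Gt Ta Tb tau Htau). lra.
Qed.

End TranslationNumber.

Lemma fs_totally_rational : totally_rational G.
Proof.
  intros a b H. destruct (succ_fixed_block a b H) as [i [o C]]. split.
  - exists (fun g => IZR (shift o g)). apply (shift_rel_translation i); auto.
  - intros tau Htau. apply (rel_translation_cyclic i a b o C tau Htau).
Qed.

End FundamentalSystem.

Theorem propositionp (I : Type) (f : I -> R -> R) (p q u : I -> R) :
  fundamental_system f p q u ->
  without_linked_fixed_points (in_gen f) /\ totally_rational (in_gen f).
Proof.
  intros FS. split.
  - exact (fs_without_linked I f p q u FS).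
  - exact (fs_totally_rational I f p q u FS).
Qed.
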